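(* Let $n_1,n_2\ge2$ and let $s$ be an integer with $1\le s\le n_2/2$. Then there exists a subset $\Omega\subset\{0,1\}^s_{n_1\times n_2}$ such that, for a numerical constant $C\ge 10^{-5}$, $$\log|\Omega|\ge C\,n_1\,s\,\log\Big(\frac{e\,n_2}{s}\Big),$$ and for any two distinct $A,A'\in\Omega$, $\ d_H(A,A')\ge \dfrac{n_1(s+1)}{16}$.
   Context: $\{0,1\}^s_{n_1\times n_2}$ denotes the set of all matrices $A=(a_{ij})\in\mathbb R^{n_1\times n_2}$ with $a_{ij}\in\{0,1\}$ such that each row of $A$ contains exactly $s$ ones. For $A=(a_{ij}),A'=(a'_{ij})$ in this set, the Hamming distance is $d_H(A,A')=\sum_{i=1}^{n_1}\sum_{j=1}^{n_2}\mathbb I(a_{ij}\ne a'_{ij})$. *)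

From mathcomp Require Import all_boot all_order all_algebra.
From Stdlib Require Import Reals.
Set Implicit Arguments. Unset Strict Implicit. Unset Printing Implicit Defensive.

(* {0,1}^s_{n1 x n2}: 0/1 matrices (entries encoded as bool, true = 1)
   with exactly s ones in each row. *)
Definition row_s_sparse (n1 n2 s : nat) (A : 'M[bool]_(n1, n2)) : bool :=
  [forall i : 'I_n1, #|[set j : 'I_n2 | A i j]| == s].

Definition dH (n1 n2 : nat) (A A' : 'M[bool]_(n1, n2)) : nat :=
  #|[set ij : 'I_n1 * 'I_n2 | A ij.1 ij.2 != A' ij.1 ij.2]|.

From mathcomp Require Import all_boot all_order all_algebra zify.
From Stdlib Require Import Reals Lra.
Set Implicit Arguments. Unset Strict Implicit. Unset Printing Implicit Defensive.

(* Gilbert-Varshamov with N = n1 s letters over an alphabet of size m = n2 / s: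
   a maximal set of words at pairwise Hamming distance >= N/8 is covered by
   the balls of radius N/8 around its words, and weighting each word by
   (7m)^(number of agreements with the centre) bounds such a ball by
   (8m)^N / (7m)^(7N/8), whence the set has at least m^(N/8) words.  Split
   the n2 columns into s blocks of m columns and write the letter of (i, b)
   as the position of the unique 1 of row i in block b: the matrices are
   s-sparse and their Hamming distance dominates that of the words, so it is
   at least n1 s / 8 >= n1 (s + 1) / 16, while
   log |Omega| >= (N/8) log m >= n1 s log (e n2 / s) / 32 since
   3 n2 <= s m^4. *)

(* Reals rebinds [^] in nat_scope to [Nat.pow]; restore MathComp's [expn]. *)
Local Notation "m ^ n" := (expn m n) : nat_scope.

Section Packing.
Variables (T : finType) (close : rel T).
Hypotheses (close_refl : reflexive close) (close_sym : symmetric close).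

Lemma maximal_packing :
  exists O : {set T},
    (forall a b, a \in O -> b \in O -> a != b -> ~~ close a b) /\
    (forall x, exists2 a, a \in O & close a x).
Proof.
pose packing (O : {set T}) :=
  [forall a in O, forall b in O, (a != b) ==> ~~ close a b].
have [O maxO] : {O | maxset packing O}.
  by apply: ex_maxset; exists set0; apply/forall_inP => a; rewrite inE.
have /forall_inP packO := maxsetp maxO.
have sepO a b : a \in O -> b \in O -> a != b -> ~~ close a b.
  by move=> aO bO; move/forall_inP: (packO a aO) => /(_ b bO) /implyP.
exists O; split=> // x.
have [a /andP[aO ax] | far_x] := pickP [pred a | (a \in O) && close a x].
  by exists a.
have xO : x \in O.
  suff packOx : packing (x |: O).
    by rewrite -(maxsetsup maxO packOx (subsetUr _ _)) setU11.
  have far a : a \in O -> ~~ close a x.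
    by move=> aO; move: (far_x a) => /=; rewrite aO /= => ->.
  apply/forall_inP => a /setU1P aOx; apply/forall_inP => b /setU1P bOx.
  apply/implyP; case: aOx bOx => [->|aO] [->|bO] ab.
  - by rewrite eqxx in ab.
  - by rewrite close_sym far.
  - exact: far.
  - exact: sepO.
by exists x; rewrite ?close_refl.
Qed.

Lemma card_le_sum_balls (O : {set T}) :
  (forall x, exists2 a, a \in O & close a x) ->
  #|T| <= \sum_(a in O) #|[set x | close a x]|.
Proof.
move=> coverO; rewrite -sum1_card.
have card_ball a : #|[set x | close a x]| = \sum_x (close a x : nat).
  by rewrite -sum1dep_card big_mkcond; apply: eq_bigr => x _; case: ifP.
under [X in _ <= X]eq_bigr => a _ do rewrite card_ball.
rewrite exchange_big /=; apply: leq_sum => x _.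
have [a aO ax] := coverO x.
by rewrite (bigD1 a) //= ax leq_addr.
Qed.

End Packing.

Section HammingCodes.
Variables (P A : finType).

Definition hamming (f g : {ffun P -> A}) : nat := #|[set p | f p != g p]|.

Lemma hammingC (f g : {ffun P -> A}) : hamming f g = hamming g f.
Proof. by apply: eq_card => p; rewrite !inE eq_sym. Qed.

Lemma hammingxx (f : {ffun P -> A}) : hamming f f = 0.
Proof. by apply/eqP; rewrite cards_eq0; apply/eqP/setP => p; rewrite !inE eqxx. Qed.

Lemma hamming_eq0 (f g : {ffun P -> A}) : (hamming f g == 0) = (f == g).
Proof.
rewrite cards_eq0; apply/eqP/eqP => [fg | -> ]; last by apply/setP => p; rewrite !inE eqxx.
by apply/ffunP => p; apply/eqP; move/setP: fg => /(_ p); rewrite !inE => /negbFE.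
Qed.

(* Weighting each word g by c ^ (number of agreements with f) factors over the coordinates. *)
Lemma sum_pow_agreements (f : {ffun P -> A}) (c : nat) :
  \sum_(g : {ffun P -> A}) c ^ #|[set p | g p == f p]| = (c + #|A|.-1) ^ #|P|.
Proof.
have agree_weight g :
    c ^ #|[set p | g p == f p]| = \prod_p (if g p == f p then c else 1).
  by rewrite -big_mkcond /= prod_nat_const cardsE.
under eq_bigr => g _ do rewrite agree_weight.
rewrite -(bigA_distr_bigA (fun p r => if r == f p then c else 1)) /=.
rewrite -prod_nat_const; apply: eq_bigr => p _.
rewrite (bigD1 (f p)) //= eqxx (eq_bigr (fun _ => 1)); last by move=> r /negbTE ->.
by rewrite sum1dep_card cardsE cardC1.
Qed.

(* A word at distance < |P|/8 from f agrees with f on at least |P| - |P|/8 coordinates. *)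
Lemma card_ball_bound (f : {ffun P -> A}) (c : nat) : 0 < c ->
  #|[set g | 8 * hamming f g < #|P|]| * c ^ (#|P| - #|P| %/ 8)
    <= (c + #|A|.-1) ^ #|P|.
Proof.
move=> c_gt0; rewrite -(sum_pow_agreements f) -sum_nat_const.
rewrite [X in _ <= X](bigID [in [set g | 8 * hamming f g < #|P|]]) /=.
apply: leq_trans (leq_addr _ _); apply: leq_sum => g; rewrite inE => near_g.
apply: leq_pexp2l => //.
have := cardsC [set p | g p == f p].
have -> : ~: [set p | g p == f p] = [set p | f p != g p].
  by apply/setP => p; rewrite !inE eq_sym.
move: near_g; rewrite /hamming.
move: #|[set p | g p == f p]| #|[set p | f p != g p]| #|P| => agree differ n; lia.
Qed.

End HammingCodes.

(* The Gilbert-Varshamov counting step with balls of radius N/8: it needs 8^8 <= 7^7 * m^6. *)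
Lemma gv_count_bound (m N K : nat) : 2 <= m -> 0 < N ->
  m ^ N * (7 * m) ^ (N - N %/ 8) <= K * (8 * m) ^ N -> m ^ N <= K ^ 8.
Proof.
move=> m_ge2 N_gt0 count.
have radius : 7 * N <= (N - N %/ 8) * 8 by lia.
have vol_gt0 : 0 < (8 * m) ^ (8 * N) by rewrite expn_gt0 muln_gt0 /= ltnW.
have base : m * (8 * m) ^ 8 <= m ^ 8 * (7 * m) ^ 7.
  have m6 : 2 ^ 6 <= m ^ 6 by rewrite leq_exp2r.
  have -> : m * (8 * m) ^ 8 = 8 ^ 8 * m ^ 9 by rewrite expnMn mulnCA -expnS.
  have -> : m ^ 8 * (7 * m) ^ 7 = 7 ^ 7 * m ^ 6 * m ^ 9.
    by rewrite expnMn mulnCA -expnD -mulnA -expnD.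
  rewrite leq_mul2r; apply/orP; right.
  by move: (m ^ 6) m6 => k; lia.
have lower : m ^ N * (8 * m) ^ (8 * N) <= (m ^ N * (7 * m) ^ (N - N %/ 8)) ^ 8.
  apply: (@leq_trans ((m ^ 8 * (7 * m) ^ 7) ^ N)).
    by rewrite expnM -expnMn leq_exp2r.
  rewrite [X in X <= _]expnMn [X in _ <= X]expnMn -!expnM [N * 8]mulnC.
  rewrite leq_mul2l; apply/orP; right.
  by apply: leq_pexp2l; first by rewrite muln_gt0 /= ltnW.
rewrite -(leq_pmul2r vol_gt0); apply: (leq_trans lower).
move: count; rewrite -(@leq_exp2r _ _ 8) // => /leq_trans; apply.
by rewrite expnMn -expnM [N * 8]mulnC.
Qed.

Lemma gilbert_varshamov (P A : finType) : 2 <= #|A| -> 0 < #|P| ->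
  exists O : {set {ffun P -> A}},
    (forall a b, a \in O -> b \in O -> a != b -> #|P| <= 8 * hamming a b) /\
    #|A| ^ #|P| <= #|O| ^ 8.
Proof.
move=> A_ge2 P_gt0.
pose close (a b : {ffun P -> A}) := 8 * hamming a b < #|P|.
have close_refl : reflexive close by move=> a; rewrite /close hammingxx muln0.
have close_sym : symmetric close by move=> a b; rewrite /close hammingC.
have [O [sepO coverO]] := maximal_packing close_refl close_sym.
exists O; split=> [a b aO bO ab | ]; first by rewrite leqNgt; apply: sepO.
apply: (gv_count_bound A_ge2 P_gt0).
rewrite -card_ffun; apply: leq_trans (leq_mul (card_le_sum_balls coverO) (leqnn _)) _.
rewrite big_distrl -sum_nat_const; apply: leq_sum => a _.
apply: leq_trans (card_ball_bound a _) _; first by rewrite muln_gt0 (ltnW A_ge2).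
by rewrite leq_exp2r //; lia.
Qed.

Section BlockEncoding.
Variables (n1 n2 s : nat) (B : finType) (col : 'I_s * B -> 'I_n2).
Hypothesis col_inj : injective col.

Definition block_mx (f : {ffun 'I_n1 * 'I_s -> B}) : 'M[bool]_(n1, n2) :=
  \matrix_(i, j) [exists b, j == col (b, f (i, b))].

Lemma block_mx_sparse (f : {ffun 'I_n1 * 'I_s -> B}) : row_s_sparse s (block_mx f).
Proof.
apply/forallP => i.
have -> : [set j | block_mx f i j] = [set col (b, f (i, b)) | b : 'I_s].
  apply/setP => j; rewrite !inE mxE.
  by apply/existsP/imsetP => [[b /eqP ->] | [b _ ->]]; exists b.
by rewrite card_imset ?card_ord // => b b' /col_inj [].
Qed.

Lemma hamming_le_dH_block_mx (f g : {ffun 'I_n1 * 'I_s -> B}) :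
  hamming f g <= dH (block_mx f) (block_mx g).
Proof.
pose pos (p : 'I_n1 * 'I_s) := (p.1, col (p.2, f p)).
have pos_inj : injective pos.
  by move=> [i b] [i' b'] [-> /col_inj [->]].
rewrite /hamming /dH -(card_imset _ pos_inj); apply: subset_leq_card.
apply/subsetP => _ /imsetP [[i b] fg ->]; move: fg; rewrite !inE /= !mxE => fg.
have -> : [exists b', col (b, f (i, b)) == col (b', f (i, b'))].
  by apply/existsP; exists b.
apply/negP => /eqP/esym/existsP [b' /eqP /col_inj [eq_b eq_fg]].
by move: fg; rewrite eq_fg -eq_b eqxx.
Qed.

Lemma block_mx_inj : injective block_mx.
Proof.
move=> f g fg; apply/eqP; rewrite -hamming_eq0 -leqn0.
apply: leq_trans (hamming_le_dH_block_mx f g) _; rewrite fg leqn0 cards_eq0.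
by apply/eqP/setP => ij; rewrite !inE eqxx.
Qed.

End BlockEncoding.

(* Any injection of 'I_s * 'I_(n2 %/ s) into the columns serves as block layout. *)
Definition block_col (n2 s : nat) (x : 'I_s * 'I_(n2 %/ s)) : 'I_n2 :=
  widen_ord (leq_trans (eq_leq (mulnC s (n2 %/ s))) (leq_trunc_div n2 s))
    (cast_ord (etrans (card_prod _ _) (congr2 muln (card_ord s) (card_ord _)))
      (enum_rank x)).

Lemma block_col_inj (n2 s : nat) : injective (@block_col n2 s).
Proof. by move=> x y /(congr1 val) /= /ord_inj /enum_rank_inj. Qed.

Lemma three_mul_le_divn_pow4 (n s : nat) : 0 < s -> 2 <= n %/ s ->
  3 * n <= s * (n %/ s) ^ 4.
Proof.
move=> s_gt0 k_ge2; have n_lt := ltn_ceil n s_gt0.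
have cube : 2 ^ 3 * (n %/ s) <= (n %/ s) ^ 4.
  by rewrite [X in _ <= X]expnSr leq_mul2r leq_exp2r ?k_ge2 ?orbT.
have : s * (2 ^ 3 * (n %/ s)) <= s * (n %/ s) ^ 4 by rewrite leq_mul2l cube orbT.
by move: (n %/ s) (_ ^ 4) k_ge2 n_lt => k k4; nia.
Qed.

Lemma ln_le_ln (x y : R) : (0 < x)%R -> (x <= y)%R -> (ln x <= ln y)%R.
Proof.
move=> x_gt0 [x_lt_y | ->]; last exact: Rle_refl.
exact/Rlt_le/ln_increasing.
Qed.

Lemma INR_expn (m n : nat) : INR (m ^ n) = (INR m ^ n)%R.
Proof. by elim: n => [|n IHn]; rewrite ?expn0 // expnS -multE mult_INR IHn. Qed.

Lemma INR_muln (m n : nat) : INR (m * n) = (INR m * INR n)%R.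
Proof. by rewrite -multE mult_INR. Qed.

Lemma ln_le_of_expn_le (m K a b : nat) : 0 < m -> 0 < b -> m ^ a <= K ^ b ->
  (INR a * ln (INR m) <= INR b * ln (INR K))%R.
Proof.
move=> m_gt0 b_gt0 mK.
have K_gt0 : 0 < K.
  rewrite lt0n; apply: contraTneq mK => ->.
  by rewrite exp0n // leqn0 expn_eq0 negb_and -lt0n m_gt0.
have Rpos (k : nat) : 0 < k -> (0 < INR k)%R by move=> /ltP; apply: lt_0_INR.
rewrite -!ln_pow; try exact: Rpos.
apply: ln_le_ln; first by apply: pow_lt; apply: Rpos.
by rewrite -!INR_expn; apply/le_INR/leP.
Qed.

Lemma ln_e_ratio_le (n s m : nat) : 0 < n -> 0 < s -> 3 * n <= s * m ^ 4 ->
  (ln (exp 1 * INR n / INR s) <= 4 * ln (INR m))%R.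
Proof.
move=> n_gt0 s_gt0 nsm.
have m_gt0 : 0 < m by case: m nsm => //; rewrite exp0n // muln0; lia.
have [Rn Rs Rm] : [/\ (0 < INR n)%R, (0 < INR s)%R & (0 < INR m)%R].
  by split; apply/lt_0_INR/ltP.
have Rnsm : (3 * INR n <= INR s * INR m ^ 4)%R.
  (* [INR_expn] goes first: matching [INR_muln] against [INR (m ^ 4)] unfolds [expn]. *)
  move/leP/le_INR: nsm; rewrite (INR_muln s) (INR_expn m 4) INR_muln.
  by rewrite (_ : INR 3 = 3%R) //; simpl; lra.
have e_le_3 := exp_le_3; have e_gt0 := exp_pos 1.
rewrite (_ : 4%R = INR 4); last by simpl; lra.
rewrite -ln_pow //; apply: ln_le_ln.
  by apply: Rdiv_lt_0_compat => //; apply: Rmult_lt_0_compat.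
apply: (Rmult_le_reg_r (INR s)) => //.
rewrite /Rdiv Rmult_assoc Rinv_l ?Rmult_1_r; last lra.
by rewrite Rmult_comm; nra.
Qed.

Lemma ln_card_lower_bound (n1 n2 s m K : nat) : 0 < n2 -> 0 < s -> 0 < m ->
  3 * n2 <= s * m ^ 4 -> m ^ (n1 * s) <= K ^ 8 ->
  (ln (INR K) >= / 32 * INR n1 * INR s * ln (exp 1 * INR n2 / INR s))%R.
Proof.
move=> n2_gt0 s_gt0 m_gt0 n2sm mK.
have ratio := ln_e_ratio_le n2_gt0 s_gt0 n2sm.
have count := ln_le_of_expn_le m_gt0 (isT : 0 < 8) mK.
rewrite INR_muln (_ : INR 8 = 8%R) in count; last by simpl; lra.
have n1s_ge0 : (0 <= INR n1 * INR s)%R by apply: Rmult_le_pos; apply: pos_INR.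
have := Rmult_le_compat_l _ _ _ n1s_ge0 ratio.
rewrite !Rmult_assoc; move: (INR n1 * _)%R => X.
lra.
Qed.

Theorem lemma1 :
  exists C : R, (C >= 1e-5)%R /\
  forall (n1 n2 s : nat),
    (2 <= n1)%N -> (2 <= n2)%N -> (1 <= s)%N -> (2 * s <= n2)%N ->
    exists Omega : {set 'M[bool]_(n1, n2)},
      (forall A, A \in Omega -> row_s_sparse s A) /\
      (ln (INR #|Omega|) >= C * INR n1 * INR s * ln (exp 1 * INR n2 / INR s))%R /\
      (forall A A', A \in Omega -> A' \in Omega -> A != A' ->
         (INR (dH A A') >= INR (n1 * (s + 1)) / 16)%R).
Proof.
exists (/ 32)%R; split; first lra.
move=> n1 n2 s n1_ge2 n2_ge2 s_gt0 s_le_half.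
have blocks_ge2 : 2 <= n2 %/ s by rewrite leq_divRL //; lia.
have letters_ge2 : 2 <= #|'I_(n2 %/ s)| by rewrite card_ord.
have cells_gt0 : 0 < #|{: 'I_n1 * 'I_s}| by rewrite card_prod !card_ord muln_gt0; lia.
have [O []] := gilbert_varshamov letters_ge2 cells_gt0.
rewrite card_prod !card_ord => sepO card_O.
pose enc := @block_mx n1 n2 s _ (@block_col n2 s).
have enc_inj : injective enc := block_mx_inj (@block_col_inj n2 s).
exists (enc @: O); split; [|split].
- by move=> _ /imsetP [f _ ->]; apply: block_mx_sparse; apply: block_col_inj.
- rewrite card_imset //.
  exact: ln_card_lower_bound (ltnW n2_ge2) s_gt0 (ltnW blocks_ge2)
    (three_mul_le_divn_pow4 s_gt0 blocks_ge2) card_O.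
- move=> _ _ /imsetP [f fO ->] /imsetP [g gO ->] fg.
  have f_neq_g : f != g by apply: contraNneq fg => ->.
  have := leq_trans (sepO f g fO gO f_neq_g)
    (leq_mul (leqnn 8) (hamming_le_dH_block_mx (@block_col_inj n2 s) f g)).
  move: (dH _ _) => d far.
  have /leP/le_INR : n1 * (s + 1) <= 16 * d by nia.
  rewrite !INR_muln (_ : INR 16 = 16%R); last by simpl; lra.
  lra.
Qed.
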